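(* For every $n\ge 2$ there is a bijection between the set of connected rooted chord diagrams with $n$ chords and the set of indecomposable rooted chord diagrams with $n$ chords having exactly two connected components. Consequently, if $I_2(x)$ denotes the ordinary generating function (by number of chords) of indecomposable chord diagrams with exactly two connected components, then $I_2(x)=C(x)-x$.
   Context: A (rooted) chord diagram with $n$ chords is a perfect matching of $\{1,\dots,2n\}$; its pairs $\{a<b\}$ are the chords. Two chords $\{a<b\},\{c<d\}$ cross if $a<c<b<d$ or $c<a<d<b$. The intersection graph has the chords as vertices and edges between crossing chords; its connected components are the connected components of the diagram, and a nonempty diagram is connected if its intersection graph is connected. A chord diagram with $n$ chords is indecomposable if there is no $k$ with $0<k<n$ such that $\{1,\dots,2k\}$ is a union of chords (the empty diagram is indecomposable by convention). $C(x)=\sum_n C_n x^n$ is the ordinary generating function of connected chord diagrams ($C_n$ = number with $n$ chords; $C(x)=x+x^2+4x^3+27x^4+\cdots$). *)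

From mathcomp Require Import all_boot all_order all_algebra.
Set Implicit Arguments. Unset Strict Implicit. Unset Printing Implicit Defensive.

(* A rooted chord diagram with n chords is a perfect matching of the 2n points;
   we encode it as a fixed-point-free involution on 'I_(n.*2)
   (points 0..2n-1, i.e. the points 1..2n shifted by one). *)
Definition pts (n : nat) := 'I_(n.*2).

Definition is_matching n (f : {ffun pts n -> pts n}) : bool :=
  [forall i, (f (f i) == i) && (f i != i)].

Definition chords n (f : {ffun pts n -> pts n}) : {set {set pts n}} :=
  [set [set i; f i] | i : pts n].

Definition cross n (A B : {set pts n}) : bool :=
  [exists a in A, exists b in A, exists c in B, exists d in B,
      [&& (a < c)%N, (c < b)%N & (b < d)%N]]
  || [exists a in A, exists b in A, exists c in B, exists d in B,
      [&& (c < a)%N, (a < d)%N & (d < b)%N]].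

Definition igraph n (f : {ffun pts n -> pts n}) : rel {set pts n} :=
  fun A B => [&& A \in chords f, B \in chords f & cross A B].

Definition ncomp n (f : {ffun pts n -> pts n}) : nat :=
  n_comp (igraph f) (mem (chords f)).

Definition connected_diag n (f : {ffun pts n -> pts n}) : bool :=
  ncomp f == 1%N.

Definition indecomposable n (f : {ffun pts n -> pts n}) : bool :=
  [forall k : 'I_n, (0 < k)%N ==>
     ~~ [forall i : pts n, (i < k.*2)%N ==> (f i < k.*2)%N]].

Definition conn_diag_pred n (f : {ffun pts n -> pts n}) : bool :=
  is_matching f && connected_diag f.

Definition indec2_pred n (f : {ffun pts n -> pts n}) : bool :=
  [&& is_matching f, indecomposable f & ncomp f == 2%N].

Definition C_coef (n : nat) : nat := #|[set f | conn_diag_pred (n:=n) f]|.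
Definition I2_coef (n : nat) : nat := #|[set f | indec2_pred (n:=n) f]|.

From mathcomp Require Import all_boot all_order all_algebra.
From mathcomp Require Import zify.
Set Implicit Arguments. Unset Strict Implicit. Unset Printing Implicit Defensive.

(* Phi (indecomposable, two components -> connected): let A be the component
   of the point 0 and q the largest point outside A.  Moving q to the last
   position N-1 makes the chord of q cross a chord of A, hence connects the
   diagram.
   Psi (connected -> indecomposable, two components): let L = N-1, remove its
   chord, let A be the component of 0 in what remains and e the largest point
   outside A and different from L.  Moving L to position e+1 separates A from
   the rest and produces an indecomposable diagram with two components.

   Both maps conjugate the involution by a "one point move" bijection of the
   points, which is monotone away from the moved point, so that crossings away
   from the moved chord are preserved ([linked_transfer]). *)

Section Connectivity.
Variable T : finType.

Lemma connect_closed (e : rel T) (Q : pred T) :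
  (forall x y, e x y -> Q x -> Q y) -> forall x y, Q x -> connect e x y -> Q y.
Proof.
move=> H x y Qx /connectP[p]; elim: p x Qx => [|w p IH] x Qx /=; first by move=> _ ->.
by case/andP=> exw pw lw; apply: (IH w (H _ _ exw Qx) pw lw).
Qed.

Lemma connect_hom_in (T' : finType) (e : rel T) (e' : rel T') (h : T -> T')
    (Q : pred T) :
  (forall x y, e x y -> Q x -> Q y) ->
  (forall x y, Q x -> e x y -> connect e' (h x) (h y)) ->
  forall x y, Q x -> connect e x y -> connect e' (h x) (h y).
Proof.
move=> Hc H x y Qx /connectP[p]; elim: p x Qx => [|w p IH] x Qx /=.
  by move=> _ ->; exact: connect0.
case/andP=> exw pw lw; apply: connect_trans (H _ _ Qx exw) _.
exact: (IH w (Hc _ _ exw Qx) pw lw).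
Qed.

Lemma connect_exit (e : rel T) (Q : pred T) x y : Q x -> ~~ Q y -> connect e x y ->
  exists u w, [/\ Q u, ~~ Q w & e u w].
Proof.
move=> Qx nQy /connectP[p]; elim: p x Qx => [|w p IH] x Qx /=.
  by move=> _ E; rewrite E Qx in nQy.
case/andP=> exw pw lw; case Qw: (Q w).
  exact: (IH w Qw pw lw).
by exists x, w; rewrite Qx Qw exw.
Qed.

Lemma connect_reach (e : rel T) (R S : pred T) (P : T -> Prop) :
  (forall x, R x -> ~~ S x) ->
  (forall x w, R x -> e x w -> S w -> P x) ->
  (forall x w, R x -> e x w -> ~~ S w -> R w /\ (P w -> P x)) ->
  forall x y, R x -> connect e x y -> S y -> P x.
Proof.
move=> H0 H1 H2 x y Rx /connectP[p]; elim: p x Rx => [|w p IH] x Rx /=.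
  by move=> _ -> Sy; move: (H0 _ Rx); rewrite Sy.
case/andP=> exw pw lw Sy; case Sw: (S w).
  exact: (H1 x w Rx exw Sw).
have [Rw HP] := H2 x w Rx exw (negbT Sw).
by apply: HP; apply: (IH w Rw pw lw Sy).
Qed.

Lemma connect_two_classes (e : rel T) x y : connect_sym e ->
  (forall w, connect e w x \/ connect e w y) ->
  forall z u v, ~~ connect e z u -> ~~ connect e z v -> connect e u v.
Proof.
move=> sym H z u v nzu nzv.
have away c w : connect e z c -> ~~ connect e z w -> ~~ connect e w c.
  move=> zc; apply: contra => wc; apply: connect_trans zc _; by rewrite sym.
have join c : connect e u c -> connect e v c -> connect e u v.
  by move=> uc vc; apply: connect_trans uc _; rewrite sym.
case: (H z) => zc.
- have [nux nvx] := (away _ _ zc nzu, away _ _ zc nzv).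
  case: (H u) => uc; first by rewrite uc in nux.
  case: (H v) => vc; first by rewrite vc in nvx.
  exact: join uc vc.
- have [nuy nvy] := (away _ _ zc nzu, away _ _ zc nzv).
  case: (H u) => uc; last by rewrite uc in nuy.
  case: (H v) => vc; last by rewrite vc in nvy.
  exact: join uc vc.
Qed.

End Connectivity.

Lemma max_attain (N : nat) (P : pred 'I_N) (i0 : 'I_N) : P i0 ->
  exists2 i, P i & \max_(j | P j) (j : nat) = i.
Proof.
move=> Pi0; rewrite (bigmax_eq_arg i0) //.
by case: arg_maxnP => // i Pi _; exists i.
Qed.

Section Chords.
Variable n : nat.
Implicit Types (f : {ffun pts n -> pts n}) (i j : pts n).

Definition lo f i : nat := minn i (f i).
Definition hi f i : nat := maxn i (f i).

Definition pcross f i j :=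
  [&& lo f i < lo f j, lo f j < hi f i & hi f i < hi f j] ||
  [&& lo f j < lo f i, lo f i < hi f j & hi f j < hi f i].

(* Points are linked when their chords cross or they share a chord; the
   components of the diagram are the classes of [connect (linked f)]. *)
Definition linked f : rel (pts n) := fun i j => pcross f i j || (f i == j).

Lemma ex_lo f i : exists2 a : pts n, a \in [set i; f i] & (a : nat) = lo f i.
Proof.
rewrite /lo; case: (leqP i (f i)) => h.
  by exists i; [rewrite !inE eqxx | lia].
by exists (f i); [rewrite !inE eqxx orbT | lia].
Qed.

Lemma ex_hi f i : exists2 a : pts n, a \in [set i; f i] & (a : nat) = hi f i.
Proof.
rewrite /hi; case: (leqP i (f i)) => h.
  by exists (f i); [rewrite !inE eqxx orbT | lia].
by exists i; [rewrite !inE eqxx | lia].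
Qed.

Lemma cross_chords f i j : cross [set i; f i] [set j; f j] = pcross f i j.
Proof.
rewrite /cross /pcross; congr orb; apply/idP/idP.
- case/existsP=> a /andP[Ha /existsP[b /andP[Hb /existsP[c /andP[Hc /existsP[d /andP[Hd H]]]]]]].
  move: Ha Hb Hc Hd H; rewrite /lo /hi !inE.
  by move=> /orP[]/eqP-> /orP[]/eqP-> /orP[]/eqP-> /orP[]/eqP->; lia.
- move=> H; have [a Ha Ea] := ex_lo f i; have [b Hb Eb] := ex_hi f i.
  have [c Hc Ec] := ex_lo f j; have [d Hd Ed] := ex_hi f j.
  apply/existsP; exists a; rewrite Ha /=; apply/existsP; exists b; rewrite Hb /=.
  apply/existsP; exists c; rewrite Hc /=; apply/existsP; exists d; rewrite Hd /=.
  by rewrite Ea Eb Ec Ed.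
- case/existsP=> a /andP[Ha /existsP[b /andP[Hb /existsP[c /andP[Hc /existsP[d /andP[Hd H]]]]]]].
  move: Ha Hb Hc Hd H; rewrite /lo /hi !inE.
  by move=> /orP[]/eqP-> /orP[]/eqP-> /orP[]/eqP-> /orP[]/eqP->; lia.
- move=> H; have [a Ha Ea] := ex_hi f i; have [b Hb Eb] := ex_lo f i.
  have [c Hc Ec] := ex_lo f j; have [d Hd Ed] := ex_hi f j.
  apply/existsP; exists b; rewrite Hb /=; apply/existsP; exists a; rewrite Ha /=.
  apply/existsP; exists c; rewrite Hc /=; apply/existsP; exists d; rewrite Hd /=.
  by rewrite Ea Eb Ec Ed.
Qed.

Lemma matchingK f : is_matching f -> forall i, f (f i) = i.
Proof. by move=> /forallP m i; case/andP: (m i) => /eqP. Qed.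

Lemma matching_neq f : is_matching f -> forall i, f i != i.
Proof. by move=> /forallP m i; case/andP: (m i). Qed.

Lemma pcrossC f i j : pcross f i j = pcross f j i.
Proof. by rewrite /pcross orbC. Qed.

Lemma pcross_self f i : pcross f i i = false.
Proof. rewrite /pcross; lia. Qed.

Lemma linked_sym f : is_matching f -> symmetric (linked f).
Proof.
move=> m i j; rewrite /linked pcrossC; congr orb.
by apply/eqP/eqP=> <-; rewrite matchingK.
Qed.

Lemma linked_connect_sym f : is_matching f -> connect_sym (linked f).
Proof. by move=> m; apply: sym_connect_sym (linked_sym m). Qed.

Lemma chord_rep f : is_matching f -> forall i x, x \in [set i; f i] ->
  [set x; f x] = [set i; f i].
Proof.
move=> m i x; rewrite !inE => /orP[]/eqP->; first by [].
by rewrite matchingK // setUC.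
Qed.

Lemma chordsP f X : X \in chords f -> exists i, X = [set i; f i].
Proof. by case/imsetP=> i _ ->; exists i. Qed.

Lemma chord_in f i : [set i; f i] \in chords f.
Proof. by apply/imsetP; exists i. Qed.

Lemma connect_chords f : is_matching f -> forall i j,
  connect (igraph f) [set i; f i] [set j; f j] = connect (linked f) i j.
Proof.
move=> m i j; apply/idP/idP; last first.
  move=> cij; apply: (@connect_hom_in _ _ _ _ (fun k => [set k; f k]) predT
    _ _ i j isT cij) => // x y _ /orP[H|/eqP<-].
    by apply: connect1; rewrite /igraph !chord_in cross_chords.
  by rewrite matchingK // setUC connect0.
pose rep (X : {set pts n}) := odflt i [pick x in X].
have repP X : X \in chords f -> X = [set rep X; f (rep X)].
  case/chordsP=> k ->; rewrite /rep; case: pickP => [x Hx|H] /=.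
    by rewrite (chord_rep m Hx).
  by move: (H k); rewrite !inE eqxx.
have repin k : rep [set k; f k] \in [set k; f k].
  rewrite /rep; case: pickP => [x Hx|H] //=.
  by move: (H k); rewrite !inE eqxx.
have end_rep k : connect (linked f) k (rep [set k; f k]).
  move: (repin k); rewrite !inE => /orP[]/eqP->; first exact: connect0.
  by apply: connect1; rewrite /linked eqxx orbT.
move=> H.
have Hrep : connect (linked f) (rep [set i; f i]) (rep [set j; f j]).
  move: H; apply: (@connect_hom_in _ _ _ _ rep predT) => // X Y _ /and3P[HX HY HC].
  apply: connect1; rewrite /linked; apply/orP; left.
  by rewrite -cross_chords -(repP _ HX) -(repP _ HY).
apply: connect_trans (connect_trans (end_rep i) Hrep) _.
by rewrite (linked_connect_sym m).
Qed.

Lemma igraph_sym f : is_matching f -> symmetric (igraph f).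
Proof.
move=> m X Y; rewrite /igraph.
case HX: (X \in chords f); case HY: (Y \in chords f) => //=.
case/chordsP: HX => i ->; case/chordsP: HY => j ->.
by rewrite !cross_chords pcrossC.
Qed.

Lemma connect_chords_in f X Y :
  connect (igraph f) X Y -> X \in chords f -> Y \in chords f.
Proof.
move=> cXY HX; apply: (connect_closed _ HX cXY).
by move=> U V /and3P[_ HV _].
Qed.

Definition rootset f :=
  [set X | (fingraph.root (igraph f) X == X) && (X \in chords f)].

Lemma ncompE f : ncomp f = #|rootset f|.
Proof. by rewrite /ncomp /rootset cardsE. Qed.

Lemma in_rootset f : is_matching f -> forall i,
  fingraph.root (igraph f) [set i; f i] \in rootset f.
Proof.
move=> m i; have Hr := connect_root (igraph f) [set i; f i].
have [j Ej] := chordsP (connect_chords_in Hr (chord_in f i)).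
rewrite inE (fingraph.root_root (sym_connect_sym (igraph_sym m))) eqxx /=.
by rewrite Ej chord_in.
Qed.

Lemma root_eq f : is_matching f -> forall i j,
  (fingraph.root (igraph f) [set i; f i] == fingraph.root (igraph f) [set j; f j])
  = connect (linked f) i j.
Proof.
move=> m i j; rewrite root_connect ?connect_chords //.
exact: sym_connect_sym (igraph_sym m).
Qed.

Lemma rootsetP f : is_matching f -> forall X, X \in rootset f ->
  exists i, X = fingraph.root (igraph f) [set i; f i].
Proof.
move=> m X; rewrite inE => /andP[/eqP HX Hc]; case/chordsP: Hc HX => i -> HX.
by exists i.
Qed.

Lemma ncomp1P f (i0 : pts n) : is_matching f ->
  (ncomp f == 1) = [forall x, forall y, connect (linked f) x y].
Proof.
move=> m; rewrite ncompE; apply/cards1P/forallP.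
  case=> r Hr x; apply/forallP=> y; rewrite -root_eq //.
  have := in_rootset m x; have := in_rootset m y; rewrite Hr !inE.
  by move=> /eqP-> /eqP->.
move=> H; exists (fingraph.root (igraph f) [set i0; f i0]); apply/setP=> X.
rewrite inE; apply/idP/idP.
  case/(rootsetP m)=> i ->; rewrite root_eq //.
  by move/forallP: (H i).
by move/eqP->; apply: in_rootset.
Qed.

Lemma ncomp2P f : is_matching f ->
  reflect (exists x y, ~~ connect (linked f) x y /\
           forall z, connect (linked f) z x \/ connect (linked f) z y)
          (ncomp f == 2).
Proof.
move=> m; rewrite ncompE; apply: (iffP (cards2P _)).
  case=> X [Y [nXY E]].
  have : X \in rootset f by rewrite E !inE eqxx.
  case/(rootsetP m)=> x EX.
  have : Y \in rootset f by rewrite E !inE eqxx orbT.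
  case/(rootsetP m)=> y EY.
  exists x, y; split; first by rewrite -root_eq // -EX -EY.
  move=> z; have := in_rootset m z; rewrite E !inE -!root_eq // -EX -EY.
  by case/orP=> ->; [left|right].
case=> x [y [nxy H]].
exists (fingraph.root (igraph f) [set x; f x]), (fingraph.root (igraph f) [set y; f y]).
split; first by rewrite root_eq.
apply/setP=> X; rewrite in_set2; apply/idP/idP.
  case/(rootsetP m)=> z ->; rewrite !root_eq //.
  by case: (H z) => ->; rewrite ?orbT.
by case/orP=> /eqP->; apply: in_rootset.
Qed.

End Chords.

Section Matching.
Variable n : nat.
Local Notation N := (n.*2).
Variable f : {ffun pts n -> pts n}.
Hypothesis m : is_matching f.

Lemma lo_f i : lo f (f i) = lo f i.
Proof. by rewrite /lo matchingK // minnC. Qed.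

Lemma hi_f i : hi f (f i) = hi f i.
Proof. by rewrite /hi matchingK // maxnC. Qed.

Lemma pcross_fl i j : pcross f (f i) j = pcross f i j.
Proof. by rewrite /pcross lo_f hi_f. Qed.

Lemma pcross_fr i j : pcross f i (f j) = pcross f i j.
Proof. by rewrite /pcross lo_f hi_f. Qed.

Lemma linked_f x : linked f x (f x).
Proof. by rewrite /linked eqxx orbT. Qed.

Lemma connect_fE x y : connect (linked f) x (f y) = connect (linked f) x y.
Proof.
apply/idP/idP => H; last exact: connect_trans H (connect1 (linked_f y)).
by rewrite -[y](matchingK m); apply: connect_trans H (connect1 (linked_f _)).
Qed.

Lemma cross_inout (u v : nat) i j : pcross f i j ->
  u < i < v -> u < f i < v -> ~~ (u < j < v) -> ~~ (u < f j < v) -> False.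
Proof. rewrite /pcross /lo /hi => /orP[/and3P[]|/and3P[]]; lia. Qed.

Lemma split_cross (i w : pts n) : lo f i < w < hi f i ->
  ~~ (lo f i < f w < hi f i) -> f w != i -> f w != f i -> pcross f w i.
Proof.
rewrite /pcross /lo /hi => H1 H2 H3 H4.
have H5 : (f w : nat) != i by [].
have H6 : (f w : nat) != f i by [].
by move: H5 H6 H1 H2; lia.
Qed.

Lemma exit_interval (e : rel (pts n)) (u v : nat) x y :
  (forall a b, e a b -> linked f a b) -> (forall a b, e a b -> e b (f b)) ->
  connect e x y -> u < x < v -> ~~ (u < y < v) ->
  exists z, [/\ connect e x z, u < z < v & ~~ (u < f z < v)].
Proof.
move=> Hsub Hf /connectP[p]; elim: p x => [|w p IH] x /=.
  by move=> _ -> ->.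
case/andP=> exw pw lw xin yout.
case win: (u < w < v).
  have [z [cwz zin fzout]] := IH w pw lw win yout.
  by exists z; split => //; apply: connect_trans (connect1 exw) cwz.
case fxin: (u < f x < v); last by exists x; rewrite connect0 xin fxin.
case/orP: (Hsub _ _ exw) => [cr|/eqP E]; last by rewrite -E fxin in win.
case fwin: (u < f w < v).
  exists (f w); split => //; last by rewrite matchingK // win.
  by apply: (connect_trans (connect1 exw)); apply: connect1; apply: Hf exw.
by case: (cross_inout cr xin fxin (negbT win) (negbT fwin)).
Qed.

Lemma enter_interval (e : rel (pts n)) (u v : nat) x y :
  (forall a b, e a b -> linked f a b) -> (forall a b, e a b -> e b (f b)) ->
  connect_sym e ->
  connect e x y -> ~~ (u < x < v) -> u < y < v ->
  exists z, [/\ connect e x z, u < z < v & ~~ (u < f z < v)].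
Proof.
move=> H1 H2 sy cxy xout yin; rewrite sy in cxy.
have [z [cyz Ha Hb]] := exit_interval H1 H2 cxy yin xout.
by exists z; split => //; apply: (connect_trans (y := y)) => //; rewrite sy.
Qed.

Lemma exit_interval_linked (u v : nat) x y : connect (linked f) x y ->
  u < x < v -> ~~ (u < y < v) ->
  exists z, [/\ connect (linked f) x z, u < z < v & ~~ (u < f z < v)].
Proof. by apply: exit_interval => // a b _; apply: linked_f. Qed.

Lemma enter_interval_linked (u v : nat) x y : connect (linked f) x y ->
  ~~ (u < x < v) -> u < y < v ->
  exists z, [/\ connect (linked f) x z, u < z < v & ~~ (u < f z < v)].
Proof.
apply: enter_interval (linked_connect_sym m) => // a b _; exact: linked_f.
Qed.

(* An initial segment [0, t) closed under f has even length: f pairs its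
   points with a left end with its points with a right end. *)
Lemma prefix_even (t : nat) : t <= N ->
  (forall i : pts n, i < t -> f i < t) -> ~~ odd t.
Proof.
move=> tN Hc.
set S := [set i : pts n | i < t].
have cS : #|S| = t.
  have -> : S = [set widen_ord tN i | i : 'I_t].
    apply/setP=> i; rewrite !inE; apply/idP/imsetP.
      by move=> it; exists (Ordinal it) => //; apply: val_inj.
    by case=> j _ E; rewrite E /=; exact: ltn_ord.
  rewrite card_imset ?card_ord //.
  by move=> a b /(congr1 val) /= E; apply: val_inj.
set A := [set i in S | i < f i]; set B := [set i in S | f i < i].
have SAB : S = A :|: B.
  apply/setP=> i; rewrite !inE; case: (i < t) => //=.
  have := matching_neq m i; rewrite -(inj_eq val_inj) /=; lia.
have AB0 : A :&: B = set0 by apply/setP=> i; rewrite !inE; lia.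
have fAB : f @: A = B.
  apply/setP=> i; rewrite inE; apply/imsetP/idP.
    case=> j; rewrite !inE => /andP[jt jf] ->; rewrite matchingK // jf andbT.
    by apply: Hc.
  rewrite inE => /andP[it fi]; exists (f i); last by rewrite matchingK.
  by rewrite !inE matchingK // fi andbT Hc.
have finj : injective f by apply: (can_inj (matchingK m)).
move: cS; rewrite SAB cardsU AB0 cards0 subn0 -fAB card_imset // => <-.
by rewrite addnn odd_double.
Qed.

End Matching.

Definition monoP (P : nat -> bool) (H : nat -> nat) :=
  forall a b, P a -> P b -> (H a < H b) = (a < b).

Lemma minn_mono P H a b : monoP P H -> P a -> P b ->
  minn (H a) (H b) = H (minn a b) /\ maxn (H a) (H b) = H (maxn a b).
Proof.
move=> Hm Pa Pb; case: (leqP a b) => h.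
  have E : H a <= H b by rewrite leqNgt Hm // -leqNgt.
  by rewrite (minn_idPl E) (maxn_idPr E).
have E : H b < H a by rewrite Hm.
by rewrite (minn_idPr (ltnW E)) (maxn_idPl (ltnW E)).
Qed.

Lemma P_minmax (P : nat -> bool) a b : P a -> P b -> P (minn a b) && P (maxn a b).
Proof. by move=> Pa Pb; case: leqP; rewrite Pa Pb. Qed.

Lemma linked_transfer n (f g : {ffun pts n -> pts n}) (h : pts n -> pts n)
    (H : nat -> nat) P :
  injective h -> (forall p : pts n, (h p : nat) = H p) -> monoP P H ->
  (forall x, g (h x) = h (f x)) ->
  forall x y : pts n, P x -> P (f x) -> P y -> P (f y) ->
  linked g (h x) (h y) = linked f x y.
Proof.
move=> hinj hH Hm gh x y Px Pfx Py Pfy.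
have [E1 E2] := minn_mono Hm Px Pfx; have [E3 E4] := minn_mono Hm Py Pfy.
case/andP: (P_minmax Px Pfx) => P1 P2; case/andP: (P_minmax Py Pfy) => P3 P4.
rewrite /linked /pcross /lo /hi !gh !hH E1 E2 E3 E4 !Hm //.
by rewrite (inj_eq hinj).
Qed.

Definition to_end (N q p : nat) :=
  if p < q then p else if p == q then N.-1 else p.-1.
Definition from_end (N q p : nat) :=
  if p < q then p else if p == N.-1 then q else p.+1.

Lemma to_end_lt N q p : q < N -> p < N -> to_end N q p < N.
Proof. rewrite /to_end; repeat case: ifP; lia. Qed.

Lemma from_end_lt N q p : q < N -> p < N -> from_end N q p < N.
Proof. rewrite /from_end; repeat case: ifP; lia. Qed.

Lemma to_endK N q p : q < N -> p < N -> from_end N q (to_end N q p) = p.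
Proof. rewrite /to_end /from_end; repeat case: ifP; lia. Qed.

Lemma from_endK N q p : q < N -> p < N -> to_end N q (from_end N q p) = p.
Proof. rewrite /to_end /from_end; repeat case: ifP; lia. Qed.

Lemma to_end_mono N q : monoP (fun p => p != q) (to_end N q).
Proof. move=> a b; rewrite /to_end; repeat case: ifP; lia. Qed.

Lemma from_end_mono N q : q < N -> monoP (fun p => p != N.-1) (from_end N q).
Proof. move=> qN a b; rewrite /from_end; repeat case: ifP; lia. Qed.

Lemma to_end_below N q p : p < q -> to_end N q p = p.
Proof. by rewrite /to_end => ->. Qed.

Lemma to_end_q N q : to_end N q q = N.-1.
Proof. by rewrite /to_end ltnn eqxx. Qed.

Lemma to_end_above N q p : q < p -> to_end N q p = p.-1.
Proof. rewrite /to_end => h; rewrite ltnNge (ltnW h) /=; case: eqP => //; lia. Qed.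

Lemma from_end_below N q p : p < q -> from_end N q p = p.
Proof. by rewrite /from_end => ->. Qed.

Lemma from_end_last N q : q <= N.-1 -> from_end N q N.-1 = q.
Proof. by rewrite /from_end => h; rewrite ltnNge h /= eqxx. Qed.

Lemma from_end_above N q p : q <= p -> p != N.-1 -> from_end N q p = p.+1.
Proof. by rewrite /from_end => h1 h2; rewrite ltnNge h1 /= (negbTE h2). Qed.

Section Moves.
Variable n : nat.
Local Notation N := (n.*2).
Implicit Types (f : {ffun pts n -> pts n}) (q p : pts n).

Definition to_endp q p : pts n := insubd p (to_end N q p).
Definition from_endp q p : pts n := insubd p (from_end N q p).

Lemma to_endpE q p : (to_endp q p : nat) = to_end N q p.
Proof. by rewrite /to_endp val_insubd to_end_lt. Qed.

Lemma from_endpE q p : (from_endp q p : nat) = from_end N q p.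
Proof. by rewrite /from_endp val_insubd from_end_lt. Qed.

Lemma to_endpK q : cancel (to_endp q) (from_endp q).
Proof. by move=> p; apply: ord_inj; rewrite from_endpE to_endpE to_endK. Qed.

Lemma from_endpK q : cancel (from_endp q) (to_endp q).
Proof. by move=> p; apply: ord_inj; rewrite to_endpE from_endpE from_endK. Qed.

Definition conjf (h h' : pts n -> pts n) f : {ffun pts n -> pts n} :=
  [ffun p => h (f (h' p))].

Lemma conjE h h' f x : cancel h h' -> conjf h h' f (h x) = h (f x).
Proof. by move=> K; rewrite /conjf ffunE K. Qed.

Lemma conj_matching h h' f : cancel h h' -> cancel h' h ->
  is_matching f -> is_matching (conjf h h' f).
Proof.
move=> K1 K2 m; apply/forallP=> p; rewrite -(K2 p) !conjE //.
by rewrite matchingK // eqxx /= (inj_eq (can_inj K1)) matching_neq.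
Qed.

Lemma conjK h h' f : cancel h h' -> cancel h' h -> conjf h' h (conjf h h' f) = f.
Proof. by move=> K1 K2; apply/ffunP=> p; rewrite /conjf !ffunE !K1. Qed.

End Moves.

(* The last point N-1 (z only provides a default inhabitant). *)
Definition Lpt n (z : pts n) : pts n := insubd z (n.*2).-1.

Lemma LptE n (z : pts n) : (Lpt z : nat) = (n.*2).-1.
Proof. rewrite /Lpt val_insubd; have := ltn_ord z; case: ifP => //; lia. Qed.

Definition qn n (f : {ffun pts n -> pts n}) (z : pts n) :=
  \max_(p : pts n | ~~ connect (linked f) z p) (p : nat).
Definition qpt n (f : {ffun pts n -> pts n}) (z : pts n) : pts n :=
  insubd z (qn f z).
Definition Phi n (f : {ffun pts n -> pts n}) (z : pts n) :=
  conjf (to_endp (qpt f z)) (from_endp (qpt f z)) f.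

Definition off_last n (g : {ffun pts n -> pts n}) (z : pts n) (x : pts n) :=
  (x != g (Lpt z)) && (x != Lpt z).
Definition linked_off n (g : {ffun pts n -> pts n}) (z : pts n) : rel (pts n) :=
  fun x y => [&& linked g x y, off_last g z x & off_last g z y].
Definition en n (g : {ffun pts n -> pts n}) (z : pts n) :=
  \max_(p : pts n | ~~ connect (linked_off g z) z p && (p != Lpt z)) (p : nat).
Definition qpt' n (g : {ffun pts n -> pts n}) (z : pts n) : pts n :=
  insubd z (en g z).+1.
Definition Psi n (g : {ffun pts n -> pts n}) (z : pts n) :=
  conjf (from_endp (qpt' g z)) (to_endp (qpt' g z)) g.

Section Phi.
Variable n : nat.
Local Notation N := (n.*2).
Variable f : {ffun pts n -> pts n}.
Hypothesis m : is_matching f.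
Variable z : pts n.
Hypothesis z0 : (z : nat) = 0.
Hypothesis ind : indecomposable f.
Hypothesis c2 : ncomp f == 2.

Local Notation Ap := (connect (linked f) z).
Local Notation q := (qpt f z).
Local Notation L := (Lpt z).

Lemma A_step x y : Ap x -> linked f x y -> Ap y.
Proof. by move=> Ax exy; apply: connect_trans Ax (connect1 exy). Qed.

Lemma notA_step x y : ~~ Ap x -> linked f x y -> ~~ Ap y.
Proof.
move=> nx exy; apply: contra nx => Ay; apply: connect_trans Ay _.
by rewrite (linked_connect_sym m); apply: connect1.
Qed.

Lemma B_nonempty : exists p, ~~ Ap p.
Proof.
case/(ncomp2P m): c2 => x [y [nxy _]].
case Ax: (Ap x); last by exists x; rewrite Ax.
case Ay: (Ap y); last by exists y; rewrite Ay.
have Ax2 : connect (linked f) x z by rewrite (linked_connect_sym m) Ax.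
by rewrite (connect_trans Ax2 Ay) in nxy.
Qed.

Lemma B_connect u v : ~~ Ap u -> ~~ Ap v -> connect (linked f) u v.
Proof.
case/(ncomp2P m): c2 => x [y [_ H]].
exact: connect_two_classes (linked_connect_sym m) H z u v.
Qed.

Lemma qP : ~~ Ap q /\ (forall p, ~~ Ap p -> p <= q).
Proof.
have [p0 Hp0] := B_nonempty.
have [i Pi Ei] := max_attain (P := fun p => ~~ Ap p) Hp0.
have -> : q = i by apply: val_inj; rewrite /= /qpt val_insubd /qn Ei ltn_ord.
split => // p Hp; rewrite -Ei.
exact: (leq_bigmax_cond (P := fun p => ~~ Ap p) (F := fun p : pts n => (p : nat))).
Qed.

(* Indecomposability forces the last point into A: otherwise the points up to
   the largest point M of A would be closed under f. *)
Lemma L_A : Ap L.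
Proof.
apply/negPn/negP => nL.
have [M AM EM] := max_attain (P := fun p => Ap p) (connect0 _ z).
have Mb p : Ap p -> p <= M.
  move=> Hp; rewrite -EM.
  exact: (leq_bigmax_cond (P := fun p => Ap p) (F := fun p : pts n => (p : nat))).
have ML : M < N.-1.
  have := ltn_ord M; have : M != L by apply: contraNneq nL => <-.
  rewrite -(inj_eq val_inj) /= LptE; lia.
have closed (i : pts n) : i < M.+1 -> f i < M.+1.
  move=> iM; rewrite ltnNge; apply/negP => fiM.
  case Ai: (Ap i).
    by have := Mb _ (etrans (connect_fE m z i) Ai); lia.
  have iM2 : i < M.
    have : i != M by apply: contraFneq Ai => ->.
    by move: iM; rewrite -(inj_eq val_inj) /=; lia.
  have zout : ~~ (i < z < f i) by rewrite z0.
  have Min : i < M < f i by apply/andP; split => //; lia.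
  have [w [czw win fwout]] := enter_interval_linked m AM zout Min.
  have fwi : f w != i by apply/eqP => E; move: win; rewrite -E matchingK //; lia.
  have fwfi : f w != f i.
    by apply/eqP => /(can_inj (matchingK m)) E; move: win; rewrite E; lia.
  have cr : pcross f w i.
    by apply: split_cross => //; rewrite /lo /hi; move: win fwout; lia.
  by move/negbT: Ai => /negP; apply; apply: A_step czw _; rewrite /linked cr.
have MN : M.+1 <= N by lia.
have k2 : (M.+1)./2.*2 = M.+1.
  by rewrite -[RHS](odd_double_half (M.+1)) (negbTE (prefix_even m MN closed)).
have kn : (M.+1)./2 < n by lia.
move/forallP: ind => /(_ (Ordinal kn)) /implyP /=; rewrite k2.
case/(_ _)/negP; first by lia.
by apply/forallP => i; apply/implyP; apply: closed.
Qed.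

Lemma fq_lt_q : f q < q /\ ~~ Ap (f q).
Proof.
have [nq qb] := qP.
have nb : ~~ Ap (f q) by rewrite connect_fE.
split => //; have := qb _ nb; have := matching_neq m q.
by rewrite -(inj_eq val_inj) /=; lia.
Qed.

(* Some chord of A passes over the whole chord of q: this chord will cross
   the chord of q once q is moved to the end. *)
Lemma straddle : exists w, [/\ Ap w, q < w & f w < f q].
Proof.
have [nq qb] := qP; have [bq nb] := fq_lt_q.
have Lq : q < L.
  have := ltn_ord q; have : q != L by apply: contraNneq nq => ->; exact: L_A.
  rewrite -(inj_eq val_inj) /= LptE; lia.
have Lin : q < L < N by rewrite Lq /= LptE; have := ltn_ord q; lia.
have zout : ~~ (q < z < N) by rewrite z0.
have cLz : connect (linked f) L z by rewrite (linked_connect_sym m) L_A.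
have [w [cLw win fwout]] := exit_interval_linked m cLz Lin zout.
have Aw : Ap w by apply: connect_trans L_A cLw.
have Afw : Ap (f w) by rewrite connect_fE.
have fwq : f w < q.
  have : f w != q by apply: contraNneq nq => <-.
  by rewrite -(inj_eq val_inj) /=; have := ltn_ord (f w); move: fwout; lia.
exists w; split => //; first by case/andP: win.
rewrite ltnNge; apply/negP => bfw.
have fwb : f w != f q by apply: contraNneq nb => <-.
have cr : pcross f q (f w).
  rewrite /pcross /lo /hi matchingK //; move: fwb; rewrite -(inj_eq val_inj) /=.
  by move: bq bfw fwq win; lia.
by move/negP: nq; apply; apply: A_step Afw _; rewrite /linked pcrossC cr.
Qed.

Local Notation g := (Phi f z).
Local Notation h := (to_endp q).

Lemma Phi_E x : g (h x) = h (f x).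
Proof. by rewrite /Phi conjE //; apply: to_endpK. Qed.

Lemma Phi_matching : is_matching g.
Proof. by apply: conj_matching => //; [apply: to_endpK | apply: from_endpK]. Qed.

Lemma Phi_transfer x y : x != q -> f x != q -> y != q -> f y != q ->
  linked g (h x) (h y) = linked f x y.
Proof.
move=> h1 h2 h3 h4.
apply: (linked_transfer (H := to_end N q) (P := fun p => p != (q : nat))) => //.
- exact: can_inj (to_endpK q).
- by move=> p; rewrite to_endpE.
- exact: to_end_mono.
- by move=> p; rewrite Phi_E.
Qed.

(* Every chord of B lies left of q, so a crossing with the chord of q survives
   the move. *)
Lemma Phi_cross_q y : ~~ Ap y -> y != q -> f y != q -> pcross f q y ->
  pcross g (h q) (h y).
Proof.
move=> ny yq fyq cr.
have [nq qb] := qP; have [bq nb] := fq_lt_q.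
have y1 : y < q by have := qb _ ny; move: yq; rewrite -(inj_eq val_inj) /=; lia.
have y2 : f y < q.
  have nfy : ~~ Ap (f y) by rewrite connect_fE.
  by have := qb _ nfy; move: fyq; rewrite -(inj_eq val_inj) /=; lia.
move: cr; rewrite /pcross /lo /hi !Phi_E !to_endpE (to_end_below _ y1).
rewrite (to_end_below _ y2) to_end_q (to_end_below _ bq).
by have := ltn_ord q; lia.
Qed.

Lemma Phi_connect_A p : Ap p -> connect (linked g) (h z) (h p).
Proof.
have [nq _] := qP; have [_ nb] := fq_lt_q.
have ne p1 : Ap p1 -> p1 != q by move=> Hp1; apply: contraNneq nq => <-.
move=> Hp; apply: (connect_hom_in (Q := fun p => Ap p) _ _ (connect0 _ z) Hp).
  by move=> x y exy Ax; apply: A_step Ax exy.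
move=> x y Ax exy; apply: connect1; have Ay := A_step Ax exy.
by rewrite Phi_transfer ?ne // connect_fE.
Qed.

(* Inside B, links survive the move (they are either away from q, or cross
   the chord of q). *)
Lemma Phi_linked_B x y : ~~ Ap x -> linked f x y -> linked g (h x) (h y).
Proof.
move=> nx exy; have ny := notA_step nx exy.
case/orP: exy => [cr|/eqP E]; last by rewrite /linked Phi_E E eqxx orbT.
case hx: ((x != q) && (f x != q)); case hy: ((y != q) && (f y != q)).
- by case/andP: hx => h1 h2; case/andP: hy => h3 h4; rewrite Phi_transfer // /linked cr.
- move/negbT: hy; rewrite negb_and !negbK => hy; case/andP: hx => h1 h2.
  have cr2 : pcross f q x.
    by case/orP: hy => /eqP E; rewrite -E ?pcross_fl // pcrossC.
  have cr3 := Phi_cross_q nx h1 h2 cr2.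
  case/orP: hy => /eqP E; first by rewrite /linked E pcrossC cr3.
  have -> : y = f q by rewrite -E matchingK.
  by rewrite -Phi_E /linked pcross_fr ?Phi_matching // pcrossC cr3.
- move/negbT: hx; rewrite negb_and !negbK => hx; case/andP: hy => h3 h4.
  have cr2 : pcross f q y by case/orP: hx => /eqP E; rewrite -E ?pcross_fl.
  have cr3 := Phi_cross_q ny h3 h4 cr2.
  case/orP: hx => /eqP E; first by rewrite /linked E cr3.
  have -> : x = f q by rewrite -E matchingK.
  by rewrite -Phi_E /linked pcross_fl ?Phi_matching // cr3.
- move/negbT: hx; rewrite negb_and !negbK => hx.
  move/negbT: hy; rewrite negb_and !negbK => hy.
  have : (y == x) || (y == f x).
    case/orP: hx => /eqP Ex; case/orP: hy => /eqP Ey.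
    + by rewrite Ex Ey eqxx.
    + by rewrite Ex -Ey matchingK // eqxx orbT.
    + by rewrite Ey -Ex eqxx orbT.
    + have : f y = f x by rewrite Ex Ey.
      by move/(can_inj (matchingK m)) ->; rewrite eqxx.
  by case/orP=> /eqP E; move: cr; rewrite E ?pcross_fr // pcross_self.
Qed.

Lemma Phi_connect_B p : ~~ Ap p -> connect (linked g) (h p) (h q).
Proof.
have [nq _] := qP.
move=> np; apply: (connect_hom_in (Q := fun p => ~~ Ap p) _ _ np (B_connect np nq)).
  by move=> x y exy nx; apply: notA_step nx exy.
by move=> x y nx exy; apply: connect1; apply: Phi_linked_B.
Qed.

Lemma Phi_bridge : exists2 w, Ap w & linked g (h w) (h q).
Proof.
have [bq _] := fq_lt_q.
have [w [Aw wq fwb]] := straddle.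
exists w => //; rewrite /linked; apply/orP; left.
rewrite /pcross /lo /hi !Phi_E !to_endpE (to_end_above _ wq).
rewrite (to_end_below _ (ltn_trans fwb bq)) to_end_q (to_end_below _ bq).
by have := ltn_ord w; lia.
Qed.

Lemma Phi_connected : ncomp g == 1.
Proof.
have sy := linked_connect_sym Phi_matching.
have hub p : connect (linked g) (h z) (h p).
  case Ap_p: (Ap p); first exact: Phi_connect_A.
  have [w Aw bridge] := Phi_bridge.
  apply: connect_trans (Phi_connect_A Aw) _; apply: connect_trans (connect1 bridge) _.
  by rewrite sy; apply: Phi_connect_B; rewrite Ap_p.
rewrite (ncomp1P z Phi_matching); apply/forallP => x; apply/forallP => y.
rewrite -(from_endpK q x) -(from_endpK q y).
by apply: connect_trans (hub _); rewrite sy.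
Qed.

(* Phi followed by Psi: after the move, q sits at the end and the point
   just before q is the largest point outside A, so Psi moves it back. *)
Local Notation Ag := (connect (linked_off g z) z).

Lemma Phi_q_last : h q = L.
Proof. by apply: val_inj; rewrite /= to_endpE to_end_q LptE. Qed.

Lemma q_pos : 0 < q.
Proof. by have [bq _] := fq_lt_q; lia. Qed.

Lemma Phi_z : h z = z.
Proof. by apply: val_inj; rewrite /= to_endpE to_end_below // z0 q_pos. Qed.

Lemma Phi_last : g L = h (f q).
Proof. by rewrite -Phi_q_last Phi_E. Qed.

Lemma Ag_to_Ap p : Ag p -> Ap (from_endp q p).
Proof.
move=> H; have Qz : Ap (from_endp q z).
  by rewrite -[X in from_endp q X]Phi_z to_endpK; exact: connect0.
apply: (connect_closed (Q := fun p => Ap (from_endp q p)) _ Qz H).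
move=> u v /and3P[euv ncu ncv] Au.
set x := from_endp q u in Au *; set y := from_endp q v.
have ux : u = h x by rewrite /x from_endpK.
have vy : v = h y by rewrite /y from_endpK.
rewrite ux vy in euv ncu ncv.
have neq w : off_last g z (h w) -> (w != q) && (f w != q).
  move=> /andP[h1 h2]; apply/andP; split.
    by apply: contraNneq h2 => ->; rewrite Phi_q_last.
  apply: contraNneq h1 => E; rewrite Phi_last.
  by have -> : f q = w by rewrite -E matchingK.
case/andP: (neq _ ncu) => h1 h2; case/andP: (neq _ ncv) => h3 h4.
by rewrite Phi_transfer // in euv; apply: A_step Au euv.
Qed.

Lemma Ap_to_Ag x : Ap x -> Ag (h x).
Proof.
move=> Ax; suff : connect (linked_off g z) (h z) (h x) by rewrite Phi_z.
apply: (connect_hom_in (Q := fun p => Ap p) _ _ (connect0 _ z) Ax).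
  by move=> u v euv Au; apply: A_step Au euv.
move=> u v Au euv; apply: connect1; have Av := A_step Au euv.
have [nq _] := qP; have [_ nb] := fq_lt_q.
have ne p : Ap p -> p != q by move=> Hp; apply: contraNneq nq => <-.
have nc_h p : Ap p -> off_last g z (h p).
  move=> Hp; rewrite /off_last Phi_last -Phi_q_last.
  rewrite !(inj_eq (can_inj (to_endpK q))) ne //.
  by rewrite andbT; apply: contraNneq nb => <-.
have Afu : Ap (f u) by rewrite connect_fE.
have Afv : Ap (f v) by rewrite connect_fE.
by rewrite /linked_off (nc_h _ Au) (nc_h _ Av) Phi_transfer ?andbT //; exact: ne.
Qed.

(* The point q-1 is outside A: otherwise a chord of A would cross that of q. *)
Definition qm : pts n := insubd z (q : nat).-1.

Lemma qmE : (qm : nat) = (q : nat).-1.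
Proof. by rewrite /qm val_insubd; have := ltn_ord q; case: ifP => //; lia. Qed.

Lemma qm_notA : ~~ Ap qm.
Proof.
have [nq qb] := qP; have [bq nb] := fq_lt_q.
case E: (qm == f q); first by rewrite (eqP E).
apply/negP => Aqm.
have qmi : f q < qm < q.
  by move: E; rewrite -(inj_eq val_inj) /= qmE; have := q_pos; lia.
have zout : ~~ (f q < z < q) by rewrite z0.
have [w [Aw win fwout]] := enter_interval_linked m Aqm zout qmi.
have fwq : f w != q by apply: contraNneq nq => <-; rewrite connect_fE.
have fwb : f w != f q by apply: contraNneq nb => <-; rewrite connect_fE.
have cr : pcross f w q.
  by apply: split_cross => //; rewrite /lo /hi; move: win fwout bq; lia.
by move/negP: nq; apply; apply: A_step Aw _; rewrite /linked cr.
Qed.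

Lemma en_Phi : en g z = (q : nat).-1.
Proof.
have [nq qb] := qP.
apply/eqP; rewrite eqn_leq; apply/andP; split.
  apply/bigmax_leqP => p /andP[np pL].
  rewrite -[p](from_endpK q); set x := from_endp q p.
  have nx : ~~ Ap x by apply: contra np => Ax; rewrite -[p](from_endpK q) Ap_to_Ag.
  have xq : x != q.
    by apply: contraNneq pL => E; rewrite -[p](from_endpK q) -/x E Phi_q_last.
  have := qb _ nx; move: xq; rewrite -(inj_eq val_inj) /= => xq xle.
  by rewrite to_endpE to_end_below; lia.
have hqm : h qm = qm.
  by apply: val_inj; rewrite /= to_endpE to_end_below qmE //; have := q_pos; lia.
rewrite -qmE -hqm /en.
apply: leq_bigmax_cond; apply/andP; split.
  by apply: contra qm_notA => H; have := Ag_to_Ap H; rewrite to_endpK.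
rewrite -(inj_eq val_inj) /= hqm qmE LptE; have := ltn_ord q; have := q_pos; lia.
Qed.

Lemma Psi_Phi : Psi g z = f.
Proof.
rewrite /Psi; have -> : qpt' g z = q.
  by apply: val_inj; rewrite /= /qpt' val_insubd en_Phi prednK ?q_pos // ltn_ord.
by rewrite /Phi conjK //; [apply: to_endpK | apply: from_endpK].
Qed.

End Phi.
Section Psi.
Variable n : nat.
Local Notation N := (n.*2).
Variable g : {ffun pts n -> pts n}.
Hypothesis m : is_matching g.
Variable z : pts n.
Hypothesis z0 : (z : nat) = 0.
Hypothesis n2 : 2 <= n.
Hypothesis c1 : ncomp g == 1.

Local Notation L := (Lpt z).
Local Notation b := (g (Lpt z)).
Local Notation Ag := (connect (linked_off g z) z).
Local Notation e := (en g z).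
Local Notation q := (qpt' g z).

Lemma Psi_all_linked x y : connect (linked g) x y.
Proof. by move: c1; rewrite (ncomp1P z m) => /forallP/(_ x)/forallP/(_ y). Qed.

Lemma b_neq_L : b != L.
Proof. exact: matching_neq. Qed.

Lemma gK x : g (g x) = x.
Proof. exact: matchingK. Qed.

Lemma ginj : injective g.
Proof. exact: can_inj gK. Qed.

(* b is not the first point: otherwise the chord {0, N-1} would cross no
   chord, and the connected diagram would have a single chord. *)
Lemma b_pos : (b : nat) != 0.
Proof.
apply/negP => /eqP bz.
have oN : 1 < N by lia.
set one : pts n := Ordinal oN.
have zout : ~~ (0 < z < L) by rewrite z0.
have oin : 0 < one < L by rewrite LptE /=; lia.
have [w [_ win gwout]] := enter_interval_linked m (Psi_all_linked z one) zout oin.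
have := ltn_ord (g w); rewrite LptE in win gwout.
move=> gwN.
have : ((g w : nat) == 0) || ((g w : nat) == N.-1) by move: gwout gwN; lia.
case/orP=> /eqP E.
  have : g w = b by apply: val_inj; rewrite /= E bz.
  by move/ginj => E2; move: win; rewrite E2 LptE; lia.
have : g w = L by apply: val_inj; rewrite /= E LptE.
by move=> E2; move: win; rewrite -(gK w) E2 bz; lia.
Qed.

Lemma off_last_z : off_last g z z.
Proof.
rewrite /off_last -!(inj_eq val_inj) /= LptE z0; apply/andP; split; last by lia.
by rewrite eq_sym b_pos.
Qed.

Lemma off_last_g x : off_last g z x -> off_last g z (g x).
Proof.
rewrite /off_last => /andP[h1 h2]; apply/andP; split.
  by rewrite (inj_eq ginj).
by apply: contraNneq h1 => E; rewrite -E gK.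
Qed.

Lemma linked_off_sub x y : linked_off g z x y -> linked g x y.
Proof. by case/and3P. Qed.

Lemma linked_off_f x y : linked_off g z x y -> linked_off g z y (g y).
Proof. by case/and3P=> _ _ h; rewrite /linked_off linked_f h off_last_g. Qed.

Lemma linked_off_sym : symmetric (linked_off g z).
Proof.
move=> x y; rewrite /linked_off (linked_sym m x y).
by case: (off_last g z x); case: (off_last g z y); rewrite ?andbT ?andbF.
Qed.

Lemma linked_off_csym : connect_sym (linked_off g z).
Proof. exact: sym_connect_sym linked_off_sym. Qed.

Lemma Ag_off_last x : Ag x -> off_last g z x.
Proof.
move=> H; apply: (connect_closed (Q := off_last g z) _ off_last_z H).
by move=> u v /and3P[].
Qed.

Lemma Ag_g x : Ag x -> Ag (g x).
Proof.
move=> H; apply: (connect_trans H); apply: connect1.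
by rewrite /linked_off linked_f (Ag_off_last H) (off_last_g (Ag_off_last H)).
Qed.

Lemma Ag_gE x : Ag (g x) = Ag x.
Proof. by apply/idP/idP => /Ag_g //; rewrite gK. Qed.

Lemma Ag_step x y : Ag x -> linked g x y -> off_last g z y -> Ag y.
Proof.
move=> Ax exy ny; apply: (connect_trans Ax); apply: connect1.
by rewrite /linked_off exy ny (Ag_off_last Ax).
Qed.

Lemma Ag_stepr x y : Ag y -> linked g x y -> off_last g z x -> Ag x.
Proof. by move=> Ay exy nx; apply: Ag_step Ay _ nx; rewrite (linked_sym m). Qed.

(* No point of A lies under the chord of a point x outside A and off the last
   chord; otherwise some chord of A would cross that of x. *)
Lemma Ag_outside_chord x a : ~~ Ag x -> off_last g z x -> Ag a ->
  ~~ (lo g x < a < hi g x).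
Proof.
move=> nx ncx Aa; apply/negP => ain.
have zout : ~~ (lo g x < z < hi g x) by rewrite z0.
have [w [czw win gwout]] :=
  enter_interval m linked_off_sub linked_off_f linked_off_csym Aa zout ain.
have Aw : Ag w := czw.
have gwx : g w != x by apply: contraNneq nx => <-; apply: Ag_g.
have gwgx : g w != g x by apply: contraNneq nx => /ginj <-.
have cr := split_cross m win gwout gwx gwgx.
by move/negP: nx; apply; apply: Ag_step Aw _ ncx; rewrite /linked cr.
Qed.

Lemma cross_last_chord x : off_last g z x -> linked g x b || linked g x L ->
  lo g x < b < hi g x.
Proof.
move=> ncx H.
have hx : pcross g x L.
  case/orP: H => /orP[cr|/eqP E].
  - by rewrite pcross_fr in cr.
  - by case/andP: ncx => _; rewrite -(ginj E) eqxx.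
  - done.
  - by case/andP: ncx; rewrite -E gK eqxx.
move: hx ncx; rewrite /off_last /pcross /lo /hi -!(inj_eq val_inj) /= LptE.
have := ltn_ord x; have := ltn_ord (g x); lia.
Qed.

(* Relative to any point a of A, every chord outside A and off the last chord
   lies entirely on the same side as b: follow a path from x to the last
   chord ([connect_reach]). *)
Lemma B_same_side x : ~~ Ag x -> off_last g z x -> forall a, Ag a ->
  ((a < x) = (a < b)) /\ ((a < g x) = (a < b)).
Proof.
move=> nx ncx.
have key := @connect_reach _ (linked g) (fun x => ~~ Ag x && off_last g z x)
  (fun w => ~~ off_last g z w)
  (fun x => forall a, Ag a -> ((a < x) = (a < b)) /\ ((a < g x) = (a < b))).
apply: (key _ _ _ x L); rewrite ?nx ?ncx ?Psi_all_linked //=;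
  last by rewrite /off_last eqxx andbF.
- by move=> u /andP[_ ->].
- move=> u w /andP[nu ncu] euw nw a Aa.
  have hc : linked g u b || linked g u L.
    move: nw; rewrite /off_last negb_and !negbK => /orP[]/eqP <-; by rewrite euw ?orbT.
  have H1 := cross_last_chord ncu hc.
  have H2 := Ag_outside_chord nu ncu Aa.
  have H3 : a != u by apply: contraNneq nu => <-.
  have H4 : a != g u by apply: contraNneq nu => E; rewrite -Ag_gE -E.
  move: H1 H2 H3 H4; rewrite -!(inj_eq val_inj) /= /lo /hi; lia.
- move=> u w /andP[nu ncu] euw /negPn ncw.
  have nw : ~~ Ag w by apply: contra nu => Aw; apply: Ag_stepr Aw euw ncu.
  split; first by rewrite nw ncw.
  move=> Pw a Aa; have [Pw1 Pw2] := Pw a Aa.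
  case/orP: euw => [cr|/eqP E];
    last by rewrite -E gK in Pw2; split; [rewrite Pw2 | rewrite E Pw1].
  have H2 := Ag_outside_chord nu ncu Aa.
  have H2' := Ag_outside_chord nw ncw Aa.
  have H3 : a != u by apply: contraNneq nu => <-.
  have H4 : a != g u by apply: contraNneq nu => E; rewrite -Ag_gE -E.
  have H5 : a != w by apply: contraNneq nw => <-.
  have H6 : a != g w by apply: contraNneq nw => E; rewrite -Ag_gE -E.
  move: cr Pw1 Pw2 H2 H2' H3 H4 H5 H6; rewrite -!(inj_eq val_inj) /= /pcross /lo /hi.
  lia.
Qed.


Lemma L_notA : ~~ Ag L.
Proof. by apply/negP => /Ag_off_last; rewrite /off_last eqxx andbF. Qed.

Lemma b_notA : ~~ Ag b.
Proof. by apply/negP => /Ag_off_last; rewrite /off_last eqxx. Qed.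

(* Some point of A lies to the right of b, since A is linked to the last
   chord through a chord passing over b. *)
Lemma A_above_b : exists a, Ag a /\ b < a.
Proof.
have [u [w [Au nw euw]]] :=
  connect_exit (Q := fun p => Ag p) (connect0 _ z) L_notA (Psi_all_linked z L).
have ncw : ~~ off_last g z w by apply: contra nw => ncw; apply: Ag_step Au euw ncw.
have hc : linked g u b || linked g u L.
  move: ncw; rewrite /off_last negb_and !negbK => /orP[]/eqP E; by rewrite -E euw ?orbT.
have := cross_last_chord (Ag_off_last Au) hc; rewrite /lo /hi => H.
case: (leqP u (g u)) => hu.
  by exists (g u); split; [apply: Ag_g | move: H; lia].
by exists u; split => //; move: H; lia.
Qed.

Lemma e_attained : exists2 E : pts n, (~~ Ag E && (E != L)) & e = E.
Proof.
apply: (max_attain (P := fun p => ~~ Ag p && (p != L)) (i0 := b)).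
by rewrite b_notA b_neq_L.
Qed.

Lemma e_max (p : pts n) : ~~ Ag p -> p != L -> p <= e.
Proof.
move=> h1 h2; rewrite /en.
apply: (leq_bigmax_cond (P := fun p => ~~ Ag p && (p != L))
  (F := fun p : pts n => (p : nat))).
by rewrite h1 h2.
Qed.

Lemma b_le_e : b <= e.
Proof. by apply: e_max; [apply: b_notA | apply: b_neq_L]. Qed.

Lemma sideE (a : pts n) : Ag a -> (a < e) = (a < b).
Proof.
move=> Aa; have [E /andP[nE EL] ->] := e_attained.
case Eb: (E == b); first by rewrite (eqP Eb).
have ncE : off_last g z E by rewrite /off_last Eb EL.
by case: (B_same_side nE ncE Aa).
Qed.

Lemma e_lt : e.+2 < N.
Proof.
have [a [Aa ba]] := A_above_b.
have [E /andP[nE EL] Ee] := e_attained.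
have ea : e <= a.
  by rewrite leqNgt; apply/negP => ae; move: (sideE Aa); rewrite ae => /esym ab; lia.
have aE : a != E by apply: contraNneq nE => <-.
have aL : a != L by case/andP: (Ag_off_last Aa).
move: aE aL; rewrite -!(inj_eq val_inj) /= LptE -Ee.
have := ltn_ord a; lia.
Qed.

Lemma qE : (q : nat) = e.+1.
Proof. by rewrite /qpt' val_insubd; have := e_lt; case: ifP => //; lia. Qed.

Lemma A_not_between (a : pts n) : Ag a -> ~~ (b < a <= e).
Proof.
move=> Aa; have [E /andP[nE EL] Ee] := e_attained.
have aE : a != E by apply: contraNneq nE => <-.
have := sideE Aa; move: aE; rewrite -(inj_eq val_inj) /= -Ee; lia.
Qed.

Definition Lm : pts n := insubd z (N.-2).
Lemma LmE : (Lm : nat) = N.-2.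
Proof. by rewrite /Lm val_insubd; case: ifP => //; lia. Qed.

Lemma Lm_e : e < Lm.
Proof. rewrite LmE; have := e_lt; lia. Qed.

Lemma Lm_neq_L : Lm != L.
Proof. by rewrite -(inj_eq val_inj) /= LmE LptE; lia. Qed.

Lemma Lm_A : Ag Lm.
Proof.
apply/negPn/negP => nL; have := e_max nL Lm_neq_L; have := Lm_e; lia.
Qed.

Local Notation f := (Psi g z).
Local Notation h := (from_endp q).

Lemma Psi_E x : f (h x) = h (g x).
Proof. by rewrite /Psi conjE //; apply: from_endpK. Qed.

Lemma Psi_matching : is_matching f.
Proof. by apply: conj_matching => //; [apply: from_endpK | apply: to_endpK]. Qed.

Lemma Psi_low (x : pts n) : x <= e -> (h x : nat) = x.
Proof. by move=> H; rewrite from_endpE from_end_below // qE. Qed.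

Lemma Psi_last : (h L : nat) = q.
Proof. by rewrite from_endpE LptE from_end_last // qE; have := e_lt; lia. Qed.

Lemma Psi_high (x : pts n) : e < x -> x != L -> (h x : nat) = x.+1.
Proof.
move=> H1 H2; rewrite from_endpE from_end_above ?qE //.
by move: H2; rewrite -(inj_eq val_inj) /= LptE.
Qed.

Lemma Psi_z : h z = z.
Proof. by apply: val_inj; rewrite /= Psi_low // z0. Qed.

Lemma Psi_transfer x y : x != L -> g x != L -> y != L -> g y != L ->
  linked f (h x) (h y) = linked g x y.
Proof.
move=> h1 h2 h3 h4.
apply: (linked_transfer (H := from_end N q) (P := fun p => p != N.-1)) => //.
- exact: can_inj (from_endpK q).
- by move=> p; rewrite from_endpE.
- by apply: from_end_mono; apply: ltn_ord.
- by move=> p; rewrite Psi_E.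
- by move: h1; rewrite -(inj_eq val_inj) /= LptE.
- by move: h2; rewrite -(inj_eq val_inj) /= LptE.
- by move: h3; rewrite -(inj_eq val_inj) /= LptE.
- by move: h4; rewrite -(inj_eq val_inj) /= LptE.
Qed.

Lemma off_last_neq x : off_last g z x -> x != L.
Proof. by case/andP. Qed.

Lemma Psi_connect_A x : Ag x -> connect (linked f) z (h x).
Proof.
move=> Ax; suff : connect (linked f) (h z) (h x) by rewrite Psi_z.
apply: (connect_hom_in (Q := fun p => Ag p) _ _ (connect0 _ z) Ax).
  by move=> u v euv Au; apply: (connect_trans Au); apply: connect1.
move=> u v Au /and3P[euv ncu ncv]; apply: connect1.
by rewrite Psi_transfer ?off_last_neq ?off_last_g.
Qed.

Lemma Psi_A_position (p : pts n) : Ag p ->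
  ((p < b) && ((h p : nat) == p)) || ((e < p) && ((h p : nat) == p.+1)).
Proof.
move=> Ap; have := A_not_between Ap.
have pb : p != b by case/andP: (Ag_off_last Ap).
have pL : p != L by case/andP: (Ag_off_last Ap).
case: (leqP p e) => pe.
  rewrite (Psi_low pe) eqxx; move: pb; rewrite -(inj_eq val_inj) /=; lia.
by rewrite (Psi_high pe pL) eqxx; lia.
Qed.

(* After the move, no link leaves the image of A: the chord of L, now at
   e+1, passes only over points outside A. *)
Lemma Psi_A_closed u v : linked f u v -> Ag (to_endp q u) -> Ag (to_endp q v).
Proof.
move=> euv Ax; rewrite -[u](to_endpK q) -[v](to_endpK q) in euv.
set x := to_endp q u in Ax euv *; set y := to_endp q v in euv *.
have ncx := Ag_off_last Ax; have ncgx := off_last_g ncx.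
case ncy: (off_last g z y).
  rewrite Psi_transfer ?off_last_neq ?off_last_g ?ncy // in euv.
  exact: Ag_step Ax euv ncy.
exfalso.
case/orP: euv => [cr|/eqP E].
  have cr2 : pcross f (h x) (h L).
    move/negbT: ncy; rewrite /off_last negb_and !negbK => /orP[]/eqP E;
      last by rewrite -E.
    by rewrite E -Psi_E pcross_fr // in cr; apply: Psi_matching.
  have Hx := Psi_A_position Ax; have Hgx := Psi_A_position (Ag_g Ax).
  have := b_le_e.
  move: cr2; rewrite /pcross /lo /hi !Psi_E Psi_last (Psi_low b_le_e) qE.
  move: Hx Hgx; lia.
rewrite Psi_E in E; move/(can_inj (from_endpK q)): E => E.
by move: ncy; rewrite -E off_last_g.
Qed.

(* The points outside A all reach the moved last chord, whose ends are
   linked. *)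
Lemma Psi_connect_B x : ~~ Ag x -> off_last g z x -> connect (linked f) (h x) (h b).
Proof.
move=> nx ncx.
have key := @connect_reach _ (linked g) (fun x => ~~ Ag x && off_last g z x)
  (fun w => ~~ off_last g z w) (fun x => connect (linked f) (h x) (h b)).
apply: (key _ _ _ x L); rewrite ?nx ?ncx ?Psi_all_linked //=;
  last by rewrite /off_last eqxx andbF.
- by move=> u /andP[_ ->].
- move=> u w /andP[nu ncu] euw nw; apply: connect1.
  have hc : linked g u b || linked g u L.
    move: nw; rewrite /off_last negb_and !negbK => /orP[]/eqP E; by rewrite -E euw ?orbT.
  have H1 := cross_last_chord ncu hc.
  have ngu : ~~ Ag (g u) by rewrite Ag_gE.
  have u1 := e_max nu (off_last_neq ncu).
  have u2 := e_max ngu (off_last_neq (off_last_g ncu)).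
  rewrite /linked; apply/orP; left.
  move: H1; rewrite /pcross /lo /hi !Psi_E gK Psi_last qE !Psi_low ?b_le_e //.
  have := b_le_e; lia.
- move=> u w /andP[nu ncu] euw /negPn ncw.
  have nw : ~~ Ag w by apply: contra nu => Aw; apply: Ag_stepr Aw euw ncu.
  split; first by rewrite nw ncw.
  move=> Pw; apply: connect_trans Pw; apply: connect1.
  by rewrite Psi_transfer ?off_last_neq ?off_last_g.
Qed.

Lemma Psi_separated : ~~ connect (linked f) z (h L).
Proof.
apply/negP => H.
have Qz : Ag (to_endp q z) by rewrite -[X in to_endp q X]Psi_z from_endpK connect0.
have := connect_closed Psi_A_closed Qz H; rewrite from_endpK.
by apply/negP; apply: L_notA.
Qed.

Lemma Psi_two_components : ncomp f == 2.
Proof.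
have fm := Psi_matching.
apply/(ncomp2P fm); exists z, (h L); split; first exact: Psi_separated.
move=> u; rewrite -[u](to_endpK q); set x := to_endp q u.
case Ax: (Ag x); first by left; rewrite (linked_connect_sym fm); apply: Psi_connect_A.
right.
have edge : linked f (h b) (h L) by rewrite /linked Psi_E gK eqxx orbT.
case xL: (x == L); first by rewrite (eqP xL) connect0.
case xb: (x == b); first by rewrite (eqP xb); apply: connect1.
have ncx : off_last g z x by rewrite /off_last xL xb.
by apply: connect_trans (Psi_connect_B (negbT Ax) ncx) (connect1 edge).
Qed.

(* A contains the new last point (the old L-1) and the first point, so a
   prefix closed under Psi g would have a chord of A leaving it. *)
Lemma Psi_indecomposable : indecomposable f.
Proof.
have fm := Psi_matching.
apply/forallP => k; apply/implyP => k0; apply/negP => /forallP H.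
have hLm : (h Lm : nat) = N.-1 by rewrite Psi_high ?Lm_e ?Lm_neq_L // LmE; lia.
have kn := ltn_ord k.
have Lin : k.*2.-1 < h Lm < N by rewrite hLm; lia.
have zout : ~~ (k.*2.-1 < z < N) by rewrite z0.
have cLz : connect (linked f) (h Lm) z.
  by rewrite (linked_connect_sym fm); apply: Psi_connect_A; apply: Lm_A.
have [w [_ win fwout]] := exit_interval_linked fm cLz Lin zout.
have fw : f w < k.*2 by move: fwout; have := ltn_ord (f w); lia.
move/implyP: (H (f w)) => /(_ fw); rewrite matchingK //; move: win; lia.
Qed.

Lemma Psi_I2 : indec2_pred f.
Proof. by rewrite /indec2_pred Psi_matching Psi_indecomposable Psi_two_components. Qed.

Lemma qn_Psi : qn f z = e.+1.
Proof.
apply/eqP; rewrite eqn_leq; apply/andP; split.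
  apply/bigmax_leqP => p np.
  rewrite -[p](to_endpK q); set x := to_endp q p.
  case Ax: (Ag x); first by rewrite -[p](to_endpK q) Psi_connect_A in np.
  case xL: (x == L); first by rewrite (eqP xL) Psi_last qE.
  have := e_max (negbT Ax) (negbT xL) => xe.
  by rewrite Psi_low //; lia.
rewrite -qE -Psi_last /qn.
apply: leq_bigmax_cond; exact: Psi_separated.
Qed.

Lemma Phi_Psi : Phi f z = g.
Proof.
rewrite /Phi; have -> : qpt f z = q by rewrite /qpt /qpt' qn_Psi.
by rewrite conjK //; [apply: from_endpK | apply: to_endpK].
Qed.

End Psi.
Section Bijection.
Variable n : nat.
Hypothesis n2 : 2 <= n.

Let z_lt : 0 < n.*2. Proof. lia. Qed.
Let z : pts n := Ordinal z_lt.
Let z0 : (z : nat) = 0. Proof. by []. Qed.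

Definition Psi_sig (s : {f : {ffun pts n -> pts n} | conn_diag_pred f}) :
  {f : {ffun pts n -> pts n} | indec2_pred f}.
Proof.
exists (Psi (val s) z).
by case: s => f /= /andP[m c1]; apply: Psi_I2.
Defined.

Definition Phi_sig (s : {f : {ffun pts n -> pts n} | indec2_pred f}) :
  {f : {ffun pts n -> pts n} | conn_diag_pred f}.
Proof.
exists (Phi (val s) z).
case: s => f /= /and3P[m ind c2].
by rewrite /conn_diag_pred Phi_matching // /connected_diag Phi_connected.
Defined.

Lemma Psi_sig_bij : bijective Psi_sig.
Proof.
exists Phi_sig.
  by case=> f Hf; apply: val_inj; case/andP: (Hf) => m c1; apply: Phi_Psi.
by case=> f Hf; apply: val_inj; case/and3P: (Hf) => m ind c2; apply: Psi_Phi.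
Qed.

Lemma I2_C_coef : I2_coef n = C_coef n.
Proof.
have := bij_eq_card Psi_sig_bij; rewrite !card_sig => E.
by rewrite /I2_coef /C_coef !cardsE E.
Qed.

End Bijection.

Lemma ncomp0 (f : {ffun pts 0 -> pts 0}) : ncomp f = 0.
Proof.
rewrite ncompE; apply/eqP; rewrite cards_eq0; apply/eqP/setP => X.
by rewrite in_set0; apply/negP; rewrite inE => /andP[_ /chordsP [[i hi] _]].
Qed.

Lemma C_coef0 : C_coef 0 = 0.
Proof.
rewrite /C_coef; apply/eqP; rewrite cards_eq0; apply/eqP/setP => f.
by rewrite !inE /conn_diag_pred /connected_diag ncomp0 andbF.
Qed.

Lemma I2_coef0 : I2_coef 0 = 0.
Proof.
rewrite /I2_coef; apply/eqP; rewrite cards_eq0; apply/eqP/setP => f.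
by rewrite !inE /indec2_pred ncomp0 !andbF.
Qed.

Lemma matching1 (f : {ffun pts 1 -> pts 1}) : is_matching f ->
  forall i, f i = rev_ord i.
Proof.
move=> m i; apply: val_inj => /=; have := matching_neq m i.
by rewrite -(inj_eq val_inj) /=; have := ltn_ord (f i); have := ltn_ord i; lia.
Qed.

Lemma I2_coef1 : I2_coef 1 = 0.
Proof.
rewrite /I2_coef; apply/eqP; rewrite cards_eq0; apply/eqP/setP => f.
rewrite !inE /indec2_pred; apply/negP => /and3P[m _ c2].
have chs : chords f \subset [set setT].
  apply/subsetP => X /chordsP [i ->]; rewrite inE; apply/eqP/setP => y.
  rewrite !inE (matching1 m) -!(inj_eq val_inj) /=.
  by have := ltn_ord y; have := ltn_ord i; lia.
have : ncomp f <= 1.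
  rewrite ncompE; apply: leq_trans (subset_leq_card _) _; last first.
    by apply: leq_trans (subset_leq_card chs) _; rewrite cards1.
  by apply/subsetP => X; rewrite inE => /andP[].
by rewrite (eqP c2).
Qed.

Definition single_chord : {ffun pts 1 -> pts 1} := [ffun i => rev_ord i].

Lemma single_chord_matching : is_matching single_chord.
Proof.
apply/forallP => i; rewrite !ffunE rev_ordK eqxx /= -(inj_eq val_inj) /=.
by have := ltn_ord i; lia.
Qed.

Lemma C_coef1 : C_coef 1 = 1.
Proof.
rewrite /C_coef; apply/eqP/cards1P; exists single_chord; apply/setP => f.
rewrite !inE; apply/idP/eqP.
  by case/andP => m _; apply/ffunP => i; rewrite (matching1 m) ffunE.
move=> ->; rewrite /conn_diag_pred single_chord_matching /connected_diag.
rewrite (ncomp1P (Ordinal (isT : 0 < 1.*2)) single_chord_matching).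
apply/forallP => x; apply/forallP => y.
case xy: (x == y); first by rewrite (eqP xy) connect0.
apply: connect1; rewrite /linked ffunE; apply/orP; right.
by move: xy; rewrite -!(inj_eq val_inj) /=; have := ltn_ord y; have := ltn_ord x; lia.
Qed.

Theorem lemma3p6p1 :
  (forall n : nat, (2 <= n)%N ->
     exists g : {f : {ffun pts n -> pts n} | conn_diag_pred f} ->
                {f : {ffun pts n -> pts n} | indec2_pred f},
       bijective g)
  /\
  (forall n : nat,
     ((I2_coef n)%:Z = (C_coef n)%:Z - (n == 1%N)%:Z)%R).
Proof.
split; first by move=> n n2; exists (Psi_sig n2); apply: Psi_sig_bij.
case=> [|[|n]].
- by rewrite I2_coef0 C_coef0.
- by rewrite I2_coef1 C_coef1 GRing.subrr.
- by rewrite I2_C_coef // GRing.subr0.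
Qed.
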